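(* Let $q>0$, $q\neq 1$, and let $x(s)=c_1q^{s}+c_2q^{-s}+c_3$ be a lattice with $q^{\mu}:=c_1/c_2$ (when $c_2=0$ or $c_1=0$, i.e. a $q$-linear lattice, see the convention below). Let $\tilde\sigma$ be a polynomial of degree at most $2$ and $\tilde\tau$ a polynomial of degree at most $1$, and put $$\sigma(s)=\tilde\sigma(x(s))-\tfrac12\tilde\tau(x(s))\,\Delta x\!\left(s-\tfrac12\right),\qquad \tau(s)=\tilde\tau(x(s)).$$ Let $A(s)$ be an arbitrary continuous function not vanishing on the interval $(a,b)$ under consideration. Define the operators $$H(s;q):=-\frac{\sqrt{\sigma(-s-\mu+1)\sigma(s)}}{\nabla x(s)}e^{-\partial_s}-\frac{\sqrt{\sigma(-s-\mu)\sigma(s+1)}}{\Delta x(s)}e^{\partial_s}+\left(\frac{\sigma(-s-\mu)}{\Delta x(s)}+\frac{\sigma(s)}{\nabla x(s)}\right)I,$$ $$\mathfrak H(s;q):=\frac{1}{\nabla x_1(s)}\,A(s)\,H(s;q)\,\frac{1}{A(s)},$$ and, for a number $\alpha$, $$\mathfrak a^{\downarrow}_\alpha(s;q):=\frac{A(s)}{\sqrt{\nabla x_1(s)}}\,e^{-\alpha\partial_s}\left(e^{\partial_s}\sqrt{\frac{\sigma(s)}{\nabla x(s)}}-\sqrt{\frac{\sigma(-s-\mu)}{\Delta x(s)}}\right)\frac{1}{A(s)},$$ $$\mathfrak a^{\uparrow}_\alpha(s;q):=\frac{1}{\nabla x_1(s)}\,A(s)\left(\sqrt{\frac{\sigma(s)}{\nabla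 x(s)}}\,e^{-\partial_s}-\sqrt{\frac{\sigma(-s-\mu)}{\Delta x(s)}}\right)e^{\alpha\partial_s}\,\frac{\sqrt{\nabla x_1(s)}}{A(s)}.$$ Then for all $\alpha\in\mathbb C$, $\mathfrak H(s;q)=\mathfrak a^{\uparrow}_\alpha(s;q)\,\mathfrak a^{\downarrow}_\alpha(s;q)$.
   Context: Notation: $\Delta f(s)=f(s+1)-f(s)$, $\nabla f(s)=f(s)-f(s-1)$; $x_1(s):=x(s+\tfrac12)$; $e^{\beta\partial_s}$ is the shift operator $e^{\beta\partial_s}f(s)=f(s+\beta)$; a function written inside an operator product denotes the operator of multiplication by that function, and products of operators are compositions (acting on functions of $s$); $I$ is the identity operator. Convention: if the lattice is $q$-linear ($x(s)=c\,q^{\pm s}+c_3$), then every occurrence of $\sigma(-s-\mu+\beta)$ is to be read as $\sigma(t)+\tau(t)\Delta x(t-\tfrac12)$ evaluated at $t=s-\beta$ (i.e. $\sigma(-s-\mu)$ is replaced by $\sigma(s)+\tau(s)\Delta x(s-1/2)$). Square roots are taken formally (fixed branches). *)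

From Stdlib Require Import Reals ClassicalDescription.
From Coquelicot Require Import Coquelicot.
Open Scope C_scope.

(* complex power q^s = exp(s ln q) for real q > 0 and complex s *)
Definition qpow (q : R) (s : C) : C :=
  (RtoC (exp (Re s * ln q)) * (cos (Im s * ln q), sin (Im s * ln q)))%C.

Definition half : C := RtoC (/ 2).

Definition lattice (c1 c2 c3 : C) (q : R) (s : C) : C :=
  c1 * qpow q s + c2 * qpow q (- s) + c3.

Definition deltaC (f : C -> C) (s : C) : C := f (s + 1) - f s.
Definition nablaC (f : C -> C) (s : C) : C := f s - f (s - 1).

Definition shalf (x : C -> C) (s : C) : C := x (s + half).

Definition sigmaL (st tt x : C -> C) (s : C) : C :=
  st (x s) - half * tt (x s) * deltaC x (s - half).
Definition tauL (tt x : C -> C) (s : C) : C := tt (x s).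

(* Sm u stands for sigma(-u-mu); in the q-linear case (c1 = 0 or c2 = 0)
   it is read as sigma(u) + tau(u) deltaC x(u - 1/2) (convention of the paper).
   Then sigma(-s-mu+beta) = Sm (s - beta). *)
Definition Sm (c1 c2 mu : C) (st tt x : C -> C) (u : C) : C :=
  if excluded_middle_informative (c1 = 0 \/ c2 = 0)
  then sigmaL st tt x u + tauL tt x u * deltaC x (u - half)
  else sigmaL st tt x (- u - mu).

Definition Op := (C -> C) -> (C -> C).
Definition mulOp (m : C -> C) : Op := fun f s => m s * f s.
Definition shiftOp (b : C) : Op := fun f s => f (s + b).
Definition idOp : Op := fun f => f.
Definition compOp (P Q : Op) : Op := fun f => P (Q f).
Definition addOp (P Q : Op) : Op := fun f s => P f s + Q f s.
Definition subOp (P Q : Op) : Op := fun f s => P f s - Q f s.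
Definition oppOp (P : Op) : Op := fun f s => - P f s.

(* H(s;q), with branch functions:
   p s  = sqrt(sigma(-s-mu+1) sigma(s)),  qq s = sqrt(sigma(-s-mu) sigma(s+1)) *)
Definition Hop (x sigma sm p qq : C -> C) : Op :=
  addOp (subOp (oppOp (compOp (mulOp (fun s => p s / nablaC x s)) (shiftOp (-1))))
               (compOp (mulOp (fun s => qq s / deltaC x s)) (shiftOp 1)))
        (mulOp (fun s => sm s / deltaC x s + sigma s / nablaC x s)).

Definition frakH (x sigma sm p qq A : C -> C) : Op :=
  compOp (mulOp (fun s => / nablaC (shalf x) s))
   (compOp (mulOp A) (compOp (Hop x sigma sm p qq) (mulOp (fun s => / A s)))).

(* branch functions: r s = sqrt(sigma(s)/nablaC x(s)), l s = sqrt(sigma(-s-mu)/deltaC x(s)),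
   sx s = sqrt(nablaC x_1(s)) *)
Definition adown (A r l sx : C -> C) (alpha : C) : Op :=
  compOp (mulOp (fun s => A s / sx s))
   (compOp (shiftOp (- alpha))
     (compOp (subOp (compOp (shiftOp 1) (mulOp r)) (mulOp l))
             (mulOp (fun s => / A s)))).

Definition aup (x A r l sx : C -> C) (alpha : C) : Op :=
  compOp (mulOp (fun s => / nablaC (shalf x) s))
   (compOp (mulOp A)
     (compOp (subOp (compOp (mulOp r) (shiftOp (-1))) (mulOp l))
       (compOp (shiftOp alpha) (mulOp (fun s => sx s / A s))))).

(* The Hamiltonian factorizes as H = B^+ B with the lowering part
   B = e^{d_s} r - l and the raising part B^+ = r e^{-d_s} - l, where
   r = sqrt(sigma(s)/nabla x(s)) and l = sqrt(sigma(-s-mu)/Delta x(s)):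
   expanding B^+ B gives the off-diagonal coefficients r(s) l(s-1) and
   l(s) r(s+1), i.e. the two product square roots of H, and the diagonal
   r^2 + l^2.  Conjugating by A, dividing by nabla x_1 and inserting
   e^{alpha d_s} (sqrt(nabla x_1)/A) (A/sqrt(nabla x_1)) e^{-alpha d_s},
   which is the identity, yields the factorization for every alpha.  Only
   the branch relations between the square roots are used, not the shape
   of the lattice or of sigma. *)
From Stdlib Require Import Reals.
From Coquelicot Require Import Coquelicot.
Open Scope C_scope.

Definition lowerOp (r l : C -> C) : Op :=
  subOp (compOp (shiftOp 1) (mulOp r)) (mulOp l).

Definition raiseOp (r l : C -> C) : Op :=
  subOp (compOp (mulOp r) (shiftOp (-1))) (mulOp l).

Lemma Hop_factorization (x sigma sm p qq r l F : C -> C) (s : C) :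
  r s * r s = sigma s / nablaC x s ->
  l s * l s = sm s / deltaC x s ->
  p s / nablaC x s = r s * l (s - 1) ->
  qq s / deltaC x s = l s * r (s + 1) ->
  Hop x sigma sm p qq F s = raiseOp r l (lowerOp r l F) s.
Proof.
  intros Hr Hl Hp Hqq.
  unfold Hop, raiseOp, lowerOp, addOp, subOp, oppOp, compOp, mulOp, shiftOp.
  rewrite Hp, Hqq, <- Hr, <- Hl.
  replace (s + -1) with (s - 1) by ring.
  replace (s - 1 + 1) with s by ring.
  ring.
Qed.

Lemma raiseOp_local (r l F G : C -> C) (s : C) :
  F s = G s -> F (s - 1) = G (s - 1) ->
  raiseOp r l F s = raiseOp r l G s.
Proof.
  intros Hs Hs1.
  unfold raiseOp, subOp, compOp, mulOp, shiftOp.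
  replace (s + -1) with (s - 1) by ring.
  now rewrite Hs, Hs1.
Qed.

Lemma mulOp_congr (m F G : C -> C) (s : C) :
  F s = G s -> mulOp m F s = mulOp m G s.
Proof. intros HFG; unfold mulOp; now rewrite HFG. Qed.

Lemma shift_mul_cancel (h g F : C -> C) (alpha t : C) :
  h (t + alpha) * g (t + alpha) = 1 ->
  shiftOp alpha (mulOp h (mulOp g (shiftOp (- alpha) F))) t = F t.
Proof.
  intros Hhg.
  unfold shiftOp, mulOp.
  rewrite Cmult_assoc, Hhg, Cmult_1_l.
  now replace (t + alpha + - alpha) with t by ring.
Qed.

Lemma ratio_mul_inv (a b : C) : a <> 0 -> b <> 0 -> b / a * (a / b) = 1.
Proof. intros Ha Hb; now field. Qed.

Lemma sqrt_neq0 (sx N : C -> C) (t : C) :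
  sx t * sx t = N t -> N t <> 0 -> sx t <> 0.
Proof. intros Hsx HN Hs; apply HN; now rewrite <- Hsx, Hs, Cmult_0_l. Qed.

Theorem theorem1 (q : R) (c1 c2 c3 mu : C) (a2 a1 a0 b1 b0 : C)
  (A r l sx p qq : C -> C) :
  (0 < q)%R -> q <> 1%R ->
  (c1 <> 0 -> c2 <> 0 -> qpow q mu = c1 / c2) ->
  let x := lattice c1 c2 c3 q in
  let st := fun z => a2 * z * z + a1 * z + a0 in
  let tt := fun z => b1 * z + b0 in
  let sigma := sigmaL st tt x in
  let sm := Sm c1 c2 mu st tt x in
  (forall z, A z <> 0) ->
  (forall z, r z * r z = sigma z / nablaC x z) ->
  (forall z, l z * l z = sm z / deltaC x z) ->
  (forall z, sx z * sx z = nablaC (shalf x) z) ->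
  (forall z, p z * p z = sm (z - 1) * sigma z) ->
  (forall z, qq z * qq z = sm z * sigma (z + 1)) ->
  (forall z, p z / nablaC x z = r z * l (z - 1)) ->
  (forall z, qq z / deltaC x z = l z * r (z + 1)) ->
  forall (alpha : C) (f : C -> C) (s : C),
    nablaC (shalf x) (s + alpha) <> 0 ->
    nablaC (shalf x) (s + alpha - 1) <> 0 ->
    frakH x sigma sm p qq A f s = compOp (aup x A r l sx alpha) (adown A r l sx alpha) f s.
Proof.
  intros _ _ _ x st tt sigma sm HA Hr Hl Hsx _ _ Hp Hqq alpha f s HN HN1.
  unfold frakH, aup, adown.
  fold (lowerOp r l) (raiseOp r l).
  unfold compOp.
  do 2 apply mulOp_congr.
  rewrite (Hop_factorization _ _ _ _ _ r l) by auto.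
  apply raiseOp_local; symmetry; apply shift_mul_cancel, ratio_mul_inv; auto.
  - exact (sqrt_neq0 _ _ _ (Hsx _) HN).
  - replace (s - 1 + alpha) with (s + alpha - 1) by ring.
    exact (sqrt_neq0 _ _ _ (Hsx _) HN1).
Qed.
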